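(* Fix one of the types I–V with data $J$, $(\phi_j)$, $(n_j)$ as in the context, let $H$ be continuous on $\mathbb{R}$, and fix an admissible index $i$ ($i=0$ for Type I; $i\in J\setminus\{\max J\}$ for Types II–V). Let $\mathbf{x}(s)$ be a solution of $$\mathbf{x}''(s)^\perp\cdot\mathbf{x}'(s)+\sum_{j\in J}\frac{n_j\,\mathbf{e}(\phi_j)\cdot\mathbf{x}'(s)}{\mathbf{e}(\phi_j)^\perp\cdot\mathbf{x}(s)}=(n-1)H(s),\qquad \|\mathbf{x}'(s)\|^2=1,$$ for $s$ near $0$, $s\neq0$ on one side of $0$, taking values in the sector $S_i$, and assume $$\lim_{s\to0}\mathbf{e}(\phi_i)^\perp\cdot\mathbf{x}(s)=0,\qquad \lim_{s\to0}\mathbf{x}(s)=\mathbf{x}_0\neq\mathbf{0}.$$ Then the limit of $\mathbf{x}'(s)$ as $s\to0$ exists and $\lim_{s\to0}\mathbf{e}(\phi_i)\cdot\mathbf{x}'(s)=0$.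
   Context: For $\mathbf{a}=(a,b)\in\mathbb{R}^2$ write $\mathbf{a}^\perp=(-b,a)$; $\mathbf{e}(\phi)=(\cos\phi,\sin\phi)$, $\mathbf{e}(\phi)^\perp=(-\sin\phi,\cos\phi)$. Type data ($J$ a finite set of consecutive integers, $\sum_{j}n_j=n-2$): Type I: $J=\{0\}$, $\phi_0=0$, $n_0=n-2$, $n\ge3$. Type II: $J=\{0,1\}$, $\phi_0=0$, $\phi_1=\pi/2$, $n_0=m$, $n_1=\ell$ ($n=\ell+m+2$, $\ell,m\in\mathbb{N}$). Type III: $J=\{-1,0,1\}$, $\phi_j=j\pi/3$, $n_j\equiv c$ with $c\in\{1,2,4,8\}$ ($n=5,8,14,26$). Type IV: $J=\{-1,0,1,2\}$, $\phi_j=j\pi/4$, $n_{\pm1}=\ell$, $n_0=n_2=k$, $(k,\ell)\in\{(2,2),(5,4),(9,6),(m-2,1),(2m-3,2),(4m-5,4)\}$. Type V: $J=\{-2,\dots,3\}$, $\phi_j=j\pi/6$, $n_j\equiv c$ with $c\in\{1,2\}$. Sector: for Type I, $S_0=\{(x,y):y>0\}$; for Types II–V, $S_i=\{\mathbf{x}\in\mathbb{R}^2:\mathbf{e}(\phi_{i+1})^\perp\cdot\mathbf{x}<0<\mathbf{e}(\phi_i)^\perp\cdot\mathbf{x}\}$. *)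

From Stdlib Require Import Reals Lra ZArith List.
From Coquelicot Require Import Coquelicot.
Import ListNotations.
Open Scope R_scope.

Inductive kind := TI | TII | TIII | TIV | TV.

(* Coordinates in R^2 are written as pairs of reals (x1, x2).
   e(phi) . (a,b)      = cos phi * a + sin phi * b
   e(phi)^perp . (a,b) = - sin phi * a + cos phi * b *)
Definition edot (phi a b : R) : R := cos phi * a + sin phi * b.
Definition eperpdot (phi a b : R) : R := - sin phi * a + cos phi * b.

(* type_data k n J phi nj : J (as the explicit list of its elements), the
   angles phi_j and multiplicities n_j are the data of type k, and n is the
   corresponding dimension (sum_j n_j = n - 2). *)
Definition type_data (k : kind) (n : nat) (J : list Z) (phi : Z -> R)
    (nj : Z -> nat) : Prop :=
  match k with
  | TI => J = [0%Z] /\ phi 0%Z = 0 /\ nj 0%Z = (n - 2)%nat /\ (3 <= n)%nat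
  | TII => J = [0%Z; 1%Z] /\ phi 0%Z = 0 /\ phi 1%Z = PI / 2 /\
      exists l m : nat, (1 <= l)%nat /\ (1 <= m)%nat /\
        nj 0%Z = m /\ nj 1%Z = l /\ n = (l + m + 2)%nat
  | TIII => J = [(-1)%Z; 0%Z; 1%Z] /\
      (forall j, In j J -> phi j = IZR j * PI / 3) /\
      exists c : nat, (c = 1 \/ c = 2 \/ c = 4 \/ c = 8)%nat /\
        (forall j, In j J -> nj j = c) /\ n = (3 * c + 2)%nat
  | TIV => J = [(-1)%Z; 0%Z; 1%Z; 2%Z] /\
      (forall j, In j J -> phi j = IZR j * PI / 4) /\
      exists k l : nat,
        ((k = 2 /\ l = 2) \/ (k = 5 /\ l = 4) \/ (k = 9 /\ l = 6) \/
         (exists m : nat, (3 <= m /\ k = m - 2 /\ l = 1) \/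
                          (2 <= m /\ k = 2 * m - 3 /\ l = 2) \/
                          (2 <= m /\ k = 4 * m - 5 /\ l = 4)))%nat /\
        nj (-1)%Z = l /\ nj 1%Z = l /\ nj 0%Z = k /\ nj 2%Z = k /\
        n = (2 * k + 2 * l + 2)%nat
  | TV => J = [(-2)%Z; (-1)%Z; 0%Z; 1%Z; 2%Z; 3%Z] /\
      (forall j, In j J -> phi j = IZR j * PI / 6) /\
      exists c : nat, (c = 1 \/ c = 2)%nat /\
        (forall j, In j J -> nj j = c) /\ n = (6 * c + 2)%nat
  end.

Definition Jmax (J : list Z) : Z := fold_right Z.max (hd 0%Z J) J.

Definition admissible (k : kind) (J : list Z) (i : Z) : Prop :=
  match k with
  | TI => i = 0%Z
  | _ => In i J /\ i <> Jmax J
  end.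

Definition in_sector (k : kind) (phi : Z -> R) (i : Z) (a b : R) : Prop :=
  match k with
  | TI => 0 < b
  | _ => eperpdot (phi (i + 1)%Z) a b < 0 /\ 0 < eperpdot (phi i) a b
  end.

Definition Jsum (J : list Z) (phi : Z -> R) (nj : Z -> nat)
    (x1 x2 v1 v2 : R) : R :=
  fold_right (fun j acc =>
    INR (nj j) * edot (phi j) v1 v2 / eperpdot (phi j) x1 x2 + acc) 0 J.

(* Write u = e_i^perp . x > 0 for the distance to the wall of S_i that x approaches, and
   c = e_i . x', d = e_i^perp . x', so that u' = d and c^2 + d^2 = 1.  Since u -> 0 and
   x -> x_0 != 0, the point x_0 lies on the line R e_i and stays away from the other walls, so
   the remaining terms of the sum are bounded and the equation reads c' = d B - n_i c d / u
   with B bounded.  Hence (u^n_i c)' = u^n_i d B.  At a time where u attains its maximum over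
   all times closer to 0, integrating from 0 gives |c| <= K |s|, and d has the sign of s
   there; a continuity argument shows that every time close to 0 is such a running maximum.
   So c -> 0 and d -> +-1, i.e. x' converges and e_i . x' -> 0. *)

From Stdlib Require Import Reals ZArith List Lra Lia.
From Coquelicot Require Import Coquelicot.
Open Scope R_scope.

Lemma filterlim_lin2 {T : Type} {F : (T -> Prop) -> Prop} {FF : Filter F}
    (a b : R) (f g : T -> R) (lf lg : R) :
  filterlim f F (locally lf) -> filterlim g F (locally lg) ->
  filterlim (fun t => a * f t + b * g t) F (locally (a * lf + b * lg)).
Proof.
  intros Hf Hg.
  apply (filterlim_comp_2 (G := locally (a * lf)) (H := locally (b * lg))
    (fun t => a * f t) (fun t => b * g t) plus).
  - exact (@filterlim_comp _ _ _ f (fun x => scal a x) F _ _ Hf (filterlim_scal_r a lf)).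
  - exact (@filterlim_comp _ _ _ g (fun x => scal b x) F _ _ Hg (filterlim_scal_r b lg)).
  - exact (filterlim_plus (a * lf) (b * lg)).
Qed.

Lemma eventually_Rabs_le {T : Type} {F : (T -> Prop) -> Prop} {FF : Filter F}
    (f : T -> R) (l : R) :
  filterlim f F (locally l) -> F (fun s => Rabs (f s) <= Rabs l + 1).
Proof.
  intros Hf.
  apply (filter_imp (fun s => Rabs (f s - l) < 1));
    [| exact (proj1 (filterlim_locally f l) Hf (mkposreal 1 Rlt_0_1))].
  intros s Hs. pose proof (Rabs_triang (f s - l) l).
  replace (f s - l + l) with (f s) in * by ring. lra.
Qed.

Lemma eventually_Rabs_sub_le {T : Type} {F : (T -> Prop) -> Prop} {FF : Filter F}
    (f g : T -> R) (c Kf Kg : R) :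
  F (fun s => Rabs (f s) <= Kf) -> F (fun s => Rabs (g s) <= Kg) ->
  F (fun s => Rabs (c * f s - g s) <= Rabs c * Kf + Kg).
Proof.
  intros Hf Hg. eapply filter_imp; [| exact (filter_and _ _ Hf Hg)]. intros s [Hfs Hgs].
  unfold Rminus. eapply Rle_trans; [apply Rabs_triang |].
  rewrite Rabs_Ropp, Rabs_mult. apply Rplus_le_compat; [| exact Hgs].
  apply Rmult_le_compat_l; [apply Rabs_pos | exact Hfs].
Qed.

Lemma filterlim_at_right_linear_bound (f : R -> R) (l L eta : R) : 0 < eta ->
  (forall t, 0 < t < eta -> Rabs (f t - l) <= L * t) ->
  filterlim f (at_right 0) (locally l).
Proof.
  intros Heta Hf. apply filterlim_locally. intros eps.
  pose proof (cond_pos eps).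
  set (L' := Rabs L + 1).
  assert (HL' : 0 < L') by (unfold L'; pose proof (Rabs_pos L); lra).
  assert (Hr : 0 < Rmin eta (eps / L')) by (apply Rmin_pos; [lra | apply Rdiv_lt_0_compat; lra]).
  exists (mkposreal _ Hr). intros t Ht Htpos.
  change (Rabs (t - 0) < Rmin eta (eps / L')) in Ht.
  rewrite Rminus_0_r, Rabs_pos_eq in Ht by lra.
  pose proof (Rmin_l eta (eps / L')). pose proof (Rmin_r eta (eps / L')).
  change (Rabs (f t - l) < eps).
  eapply Rle_lt_trans; [apply Hf; lra |].
  assert (L * t <= L' * t) by (apply Rmult_le_compat_r; [lra | unfold L'; pose proof (Rle_abs L); lra]).
  assert (L' * t < L' * (eps / L')) by (apply Rmult_lt_compat_l; lra).
  replace (L' * (eps / L')) with (pos eps) in * by (field; lra). lra.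
Qed.

Lemma continuous_lt_near (f : R -> R) (x lo : R) : continuous f x -> lo < f x ->
  exists e, 0 < e /\ forall y, Rabs (y - x) < e -> lo < f y.
Proof.
  intros Hc Hlt.
  assert (Heps : 0 < f x - lo) by lra.
  destruct (proj1 (filterlim_locally f (f x)) Hc (mkposreal _ Heps)) as [e He].
  exists e. split; [apply cond_pos |]. intros y Hy.
  specialize (He y Hy). change (Rabs (f y - f x) < f x - lo) in He.
  apply Rabs_def2 in He. lra.
Qed.

Lemma continuous_ge_of_left (f : R -> R) (a x lo : R) : continuous f x -> a < x ->
  (forall y, a <= y < x -> lo <= f y) -> lo <= f x.
Proof.
  intros Hc Hax Hleft.
  destruct (Rle_lt_dec lo (f x)) as [| Hlt]; [assumption | exfalso].
  destruct (continuous_lt_near (fun y => - f y) x (- lo)) as [e [He Hnear]];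
    [apply (continuous_opp f), Hc | lra |].
  set (y := Rmax a (x - e / 2)).
  pose proof (Rmax_l a (x - e / 2)). pose proof (Rmax_r a (x - e / 2)).
  assert (Hy : y < x) by (apply Rmax_lub_lt; lra).
  specialize (Hnear y ltac:(apply Rabs_def1; unfold y in *; lra)).
  specialize (Hleft y ltac:(unfold y in *; lra)). lra.
Qed.

(* Real induction: the set of [r] up to which [lo <= D] holds is closed by continuity and
   open to the right by the strict inequality, hence it is all of [a, b]. *)
Lemma continuous_induction_ge (D : R -> R) (a b lo : R) :
  a <= b -> (forall r, a <= r <= b -> continuous D r) -> lo <= D a ->
  (forall r, a <= r <= b -> (forall r', a <= r' <= r -> lo <= D r') -> lo < D r) ->
  forall r, a <= r <= b -> lo <= D r.
Proof.
  intros Hab Hcont Ha Hstep.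
  set (E := fun r => a <= r <= b /\ forall r', a <= r' <= r -> lo <= D r').
  assert (HEa : E a).
  { split; [lra |]. intros r' Hr'. replace r' with a by lra. exact Ha. }
  destruct (completeness E) as [r0 [Hub Hlub]].
  { exists b. intros r [Hr _]. lra. }
  { exists a. exact HEa. }
  assert (Hr0 : a <= r0 <= b).
  { split; [apply Hub, HEa | apply Hlub; intros r [Hr _]; lra]. }
  assert (Hbelow : forall r', a <= r' < r0 -> lo <= D r').
  { intros r' Hr'. destruct (Rle_lt_dec lo (D r')) as [| Hlt]; [assumption | exfalso].
    assert (Hub' : is_upper_bound E r').
    { intros r [Hr HDr]. destruct (Rle_lt_dec r r') as [| Hrr]; [assumption |].
      specialize (HDr r' ltac:(lra)). lra. }
    specialize (Hlub r' Hub'). lra. }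
  assert (HEr0 : E r0).
  { split; [exact Hr0 |]. intros r' Hr'.
    destruct (Rlt_le_dec r' r0); [apply Hbelow; lra |]. replace r' with r0 by lra.
    destruct (Req_dec r0 a) as [-> | Hne]; [exact Ha |].
    apply (continuous_ge_of_left D a); [apply Hcont, Hr0 | lra | exact Hbelow]. }
  assert (Hr0b : r0 = b).
  { destruct (Req_dec r0 b) as [| Hne]; [assumption | exfalso].
    destruct (continuous_lt_near D r0 lo (Hcont r0 Hr0) (Hstep r0 Hr0 (proj2 HEr0)))
      as [e [He Hnear]].
    pose proof (Rmin_l (r0 + e / 2) b). pose proof (Rmin_r (r0 + e / 2) b).
    set (r1 := Rmin (r0 + e / 2) b) in *.
    assert (r0 < r1) by (apply Rmin_glb_lt; lra).
    assert (HEr1 : E r1).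
    { split; [lra |]. intros r' Hr'. destruct (Rle_lt_dec r' r0).
      - apply (proj2 HEr0). lra.
      - left. apply Hnear, Rabs_def1; lra. }
    specialize (Hub r1 HEr1). lra. }
  intros r Hr. apply (proj2 HEr0). lra.
Qed.

Lemma is_derive_lin2 (a b : R) (f g : R -> R) (s df dg : R) :
  is_derive f s df -> is_derive g s dg ->
  is_derive (fun t => a * f t + b * g t) s (a * df + b * dg).
Proof.
  intros Hf Hg.
  apply (is_derive_plus (fun t => a * f t) (fun t => b * g t));
    apply is_derive_scal; assumption.
Qed.

Lemma edot_sqr_add_eperpdot_sqr (phi a b : R) :
  edot phi a b ^ 2 + eperpdot phi a b ^ 2 = a ^ 2 + b ^ 2.
Proof.
  pose proof (sin2_cos2 phi) as Hsc. unfold Rsqr in Hsc.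
  unfold edot, eperpdot.
  replace (a ^ 2 + b ^ 2) with ((sin phi * sin phi + cos phi * cos phi) * (a ^ 2 + b ^ 2))
    by (rewrite Hsc; ring).
  ring.
Qed.

Lemma edot_eperpdot_inv1 (phi a b : R) :
  a = cos phi * edot phi a b + - sin phi * eperpdot phi a b.
Proof.
  pose proof (sin2_cos2 phi) as Hsc. unfold Rsqr in Hsc. unfold edot, eperpdot.
  replace a with ((sin phi * sin phi + cos phi * cos phi) * a) at 1 by (rewrite Hsc; ring).
  ring.
Qed.

Lemma edot_eperpdot_inv2 (phi a b : R) :
  b = sin phi * edot phi a b + cos phi * eperpdot phi a b.
Proof.
  pose proof (sin2_cos2 phi) as Hsc. unfold Rsqr in Hsc. unfold edot, eperpdot.
  replace b with ((sin phi * sin phi + cos phi * cos phi) * b) at 1 by (rewrite Hsc; ring).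
  ring.
Qed.

Lemma Rabs_edot_unit (phi a b : R) : a ^ 2 + b ^ 2 = 1 -> Rabs (edot phi a b) <= 1.
Proof.
  intros Hab. pose proof (edot_sqr_add_eperpdot_sqr phi a b) as Hsq.
  pose proof (pow2_ge_0 (eperpdot phi a b)).
  apply Rabs_le. split; nra.
Qed.

Lemma filterlim_frame_coords {T : Type} {F : (T -> Prop) -> Prop} {FF : Filter F}
    (phi p q : R) (v1 v2 : T -> R) :
  filterlim (fun s => edot phi (v1 s) (v2 s)) F (locally p) ->
  filterlim (fun s => eperpdot phi (v1 s) (v2 s)) F (locally q) ->
  filterlim v1 F (locally (cos phi * p + - sin phi * q)) /\
  filterlim v2 F (locally (sin phi * p + cos phi * q)).
Proof.
  intros Hp Hq. split.
  - apply (filterlim_ext (fun s => cos phi * edot phi (v1 s) (v2 s)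
                                  + - sin phi * eperpdot phi (v1 s) (v2 s))).
    + intros s. symmetry. apply edot_eperpdot_inv1.
    + apply filterlim_lin2; assumption.
  - apply (filterlim_ext (fun s => sin phi * edot phi (v1 s) (v2 s)
                                  + cos phi * eperpdot phi (v1 s) (v2 s))).
    + intros s. symmetry. apply edot_eperpdot_inv2.
    + apply filterlim_lin2; assumption.
Qed.

(* The 2x2 determinant of e(b)^perp and e(a)^perp is sin (b - a). *)
Lemma eperpdot_ne0_off_line (a b x y : R) :
  eperpdot a x y = 0 -> (x, y) <> (0, 0) -> sin (b - a) <> 0 ->
  eperpdot b x y <> 0.
Proof.
  intros Ha Hxy Hsin Hb. apply Hxy. rewrite sin_minus in Hsin.
  unfold eperpdot in Ha, Hb.
  assert (Hx : x * (sin b * cos a - cos b * sin a) = 0).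
  { replace (x * (sin b * cos a - cos b * sin a))
      with (cos b * (- sin a * x + cos a * y) - cos a * (- sin b * x + cos b * y))
      by ring.
    rewrite Ha, Hb. ring. }
  assert (Hy : y * (sin b * cos a - cos b * sin a) = 0).
  { replace (y * (sin b * cos a - cos b * sin a))
      with (sin b * (- sin a * x + cos a * y) - sin a * (- sin b * x + cos b * y))
      by ring.
    rewrite Ha, Hb. ring. }
  apply Rmult_integral in Hx as [-> | Hx]; [| contradiction].
  apply Rmult_integral in Hy as [-> | Hy]; [| contradiction].
  reflexivity.
Qed.

Lemma sin_frac_PI_neq0 (k q : Z) : k <> 0%Z -> (Z.abs k < q)%Z -> sin (IZR k * PI / IZR q) <> 0.
Proof.
  intros Hk Hkq. pose proof PI_RGT_0.
  assert (Hq : 0 < IZR q) by (apply IZR_lt; lia).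
  assert (Hpos : forall k', (0 < k' < q)%Z -> 0 < sin (IZR k' * PI / IZR q)).
  { intros k' [H1 H2]. apply IZR_lt in H1. apply IZR_lt in H2.
    assert (0 < IZR k' * PI / IZR q) by (apply Rdiv_lt_0_compat; nra).
    apply sin_gt_0; [assumption |].
    apply (Rmult_lt_reg_r (IZR q)); [lra |].
    replace (IZR k' * PI / IZR q * IZR q) with (IZR k' * PI) by (field; lra). nra. }
  destruct (Z_lt_le_dec 0 k).
  - pose proof (Hpos k ltac:(lia)). lra.
  - pose proof (Hpos (- k)%Z ltac:(lia)) as Hneg.
    rewrite opp_IZR in Hneg.
    replace (- IZR k * PI / IZR q) with (- (IZR k * PI / IZR q)) in Hneg by (field; lra).
    rewrite sin_neg in Hneg. lra.
Qed.

Lemma unit_circle_near_one (c y : R) :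
  c ^ 2 + y ^ 2 = 1 -> 0 <= y -> Rabs (y - 1) <= Rabs c.
Proof.
  intros Hcy Hy.
  assert (Hc1 : Rabs c <= 1) by (apply Rabs_le; split; nra).
  assert (Hsq : c ^ 2 = Rabs c * Rabs c) by (rewrite <- Rabs_mult, Rabs_pos_eq; nra).
  rewrite Rabs_left1 by nra.
  pose proof (Rabs_pos c). nra.
Qed.

Lemma Rabs_frac_le (N x y r : R) : 0 <= N -> Rabs x <= 1 -> 0 < r -> r <= Rabs y ->
  Rabs (N * x / y) <= N / r.
Proof.
  intros HN Hx Hr Hy.
  unfold Rdiv. rewrite !Rabs_mult, Rabs_inv, (Rabs_pos_eq N) by assumption.
  rewrite Rmult_assoc. apply Rmult_le_compat_l; [assumption |].
  rewrite <- (Rmult_1_l (/ r)). pose proof (Rabs_pos x).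
  apply Rmult_le_compat; [lra | left; apply Rinv_0_lt_compat; lra | lra |].
  apply Rinv_le_contravar; lra.
Qed.

Lemma is_derive_edot (phi : R) (f g : R -> R) (s df dg : R) :
  is_derive f s df -> is_derive g s dg ->
  is_derive (fun t => edot phi (f t) (g t)) s (edot phi df dg).
Proof. apply is_derive_lin2. Qed.

Lemma is_derive_eperpdot (phi : R) (f g : R -> R) (s df dg : R) :
  is_derive f s df -> is_derive g s dg ->
  is_derive (fun t => eperpdot phi (f t) (g t)) s (eperpdot phi df dg).
Proof. apply is_derive_lin2. Qed.

Lemma unit_speed_orth (v1 v2 : R -> R) (s a1 a2 : R) :
  locally s (fun t => v1 t ^ 2 + v2 t ^ 2 = 1) ->
  is_derive v1 s a1 -> is_derive v2 s a2 ->
  v1 s * a1 + v2 s * a2 = 0.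
Proof.
  intros Hunit H1 H2.
  assert (Hsq : is_derive (fun t => v1 t ^ 2 + v2 t ^ 2) s
                  (INR 2 * a1 * v1 s ^ pred 2 + INR 2 * a2 * v2 s ^ pred 2)).
  { apply (is_derive_plus (fun t => v1 t ^ 2) (fun t => v2 t ^ 2));
      apply is_derive_pow; assumption. }
  assert (Hconst : is_derive (fun t => v1 t ^ 2 + v2 t ^ 2) s 0).
  { apply (is_derive_ext_loc (fun _ => 1)).
    - apply (filter_imp _ _ (fun t Ht => eq_sym Ht) Hunit).
    - apply (is_derive_const (K := R_AbsRing) (V := R_NormedModule)). }
  pose proof (is_derive_unique _ _ _ Hsq) as E.
  rewrite (is_derive_unique _ _ _ Hconst) in E. simpl in E. lra.
Qed.

Lemma edot_orth_accel (phi v1 v2 a1 a2 : R) :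
  v1 ^ 2 + v2 ^ 2 = 1 -> v1 * a1 + v2 * a2 = 0 ->
  edot phi a1 a2 = (- a2 * v1 + a1 * v2) * eperpdot phi v1 v2.
Proof.
  intros Hunit Horth. unfold edot, eperpdot.
  replace (cos phi * a1 + sin phi * a2)
    with ((cos phi * a1 + sin phi * a2) * (v1 ^ 2 + v2 ^ 2)) by (rewrite Hunit; ring).
  replace ((cos phi * a1 + sin phi * a2) * (v1 ^ 2 + v2 ^ 2))
    with ((cos phi * v1 + sin phi * v2) * (v1 * a1 + v2 * a2)
          + (- a2 * v1 + a1 * v2) * (- sin phi * v1 + cos phi * v2)) by ring.
  rewrite Horth. ring.
Qed.

(* Along a unit-speed curve the curvature is [x''^perp . x'], and [(e . x')' = kappa (e^perp . x')];
   solving the equation for [kappa] gives the derivative of the angle coordinate. *)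
Lemma edot_velocity_derive (phi N u rest rhs : R) (v1 v2 : R -> R) (s a1 a2 : R) :
  locally s (fun t => v1 t ^ 2 + v2 t ^ 2 = 1) ->
  is_derive v1 s a1 -> is_derive v2 s a2 -> u <> 0 ->
  (- a2 * v1 s + a1 * v2 s) + (N * edot phi (v1 s) (v2 s) / u + rest) = rhs ->
  is_derive (fun t => edot phi (v1 t) (v2 t)) s
    (eperpdot phi (v1 s) (v2 s) * (rhs - rest)
     - N * edot phi (v1 s) (v2 s) * eperpdot phi (v1 s) (v2 s) / u).
Proof.
  intros Hunit H1 H2 Hu Heq.
  replace (eperpdot phi (v1 s) (v2 s) * (rhs - rest)
           - N * edot phi (v1 s) (v2 s) * eperpdot phi (v1 s) (v2 s) / u)
    with (edot phi a1 a2).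
  - apply is_derive_edot; assumption.
  - rewrite (edot_orth_accel phi (v1 s) (v2 s) a1 a2);
      [| apply (locally_singleton _ _ Hunit) | apply (unit_speed_orth v1 v2); assumption].
    rewrite <- Heq. field. exact Hu.
Qed.

Definition running_max (U : R -> R) (tau : R) : Prop :=
  forall t, 0 < t <= tau -> U t <= U tau.

Lemma running_max_derive_nonneg (U : R -> R) (tau d : R) :
  0 < tau -> is_derive U tau d -> running_max U tau -> 0 <= d.
Proof.
  intros Htau Hd Hmax.
  destruct (Rle_lt_dec 0 d) as [| Hneg]; [assumption | exfalso].
  apply is_derive_Reals in Hd.
  destruct (Hd (- d / 2)) as [eta Heta]; [lra |].
  pose proof (cond_pos eta).
  pose proof (Rmin_l (eta / 2) (tau / 2)). pose proof (Rmin_r (eta / 2) (tau / 2)).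
  assert (0 < Rmin (eta / 2) (tau / 2)) by (apply Rmin_pos; lra).
  set (h := - Rmin (eta / 2) (tau / 2)) in *.
  assert (Hquot : Rabs ((U (tau + h) - U tau) / h - d) < - d / 2).
  { apply Heta; unfold h; [lra |]. rewrite Rabs_Ropp, Rabs_pos_eq; lra. }
  apply Rabs_def2 in Hquot as [Hq _].
  assert (U (tau + h) <= U tau) by (apply Hmax; unfold h; lra).
  assert (Hh : h < 0) by (unfold h; lra).
  assert (0 <= (U (tau + h) - U tau) / h).
  { replace ((U (tau + h) - U tau) / h) with ((U tau - U (tau + h)) / - h)
      by (field; lra).
    apply Rdiv_le_0_compat; lra. }
  lra.
Qed.

Section AngleDecay.

Variables (U C D B : R -> R) (m : nat) (K delta : R).

Hypothesis Hdelta : 0 < delta.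
Hypothesis HU_derive : forall t, 0 < t < delta -> is_derive U t (D t).
Hypothesis HC_derive : forall t, 0 < t < delta ->
  is_derive C t (D t * B t - INR (S m) * C t * D t / U t).
Hypothesis HCD_unit : forall t, 0 < t < delta -> C t ^ 2 + D t ^ 2 = 1.
Hypothesis HU_pos : forall t, 0 < t < delta -> 0 < U t.
Hypothesis HU_lim : filterlim U (at_right 0) (locally 0).
Hypothesis HB_bound : forall t, 0 < t < delta -> Rabs (B t) <= K.
Hypothesis HD_cont : forall t, 0 < t < delta -> continuous D t.

Let Q (t : R) : R := U t ^ S m * C t.

Lemma U_small (eps : R) : 0 < eps ->
  exists eta, 0 < eta /\ forall t, 0 < t < eta -> U t < eps.
Proof.
  intros Heps.
  destruct (proj1 (filterlim_locally U 0) HU_lim (mkposreal eps Heps)) as [eta Heta].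
  exists eta. split; [apply cond_pos |]. intros t Ht.
  assert (Hball : Rabs (U t - 0) < eps).
  { apply Heta; [| lra]. change (Rabs (t - 0) < eta). rewrite Rminus_0_r, Rabs_pos_eq; lra. }
  apply Rabs_def2 in Hball. lra.
Qed.

(* The singular term of the equation for [C] is exactly the one removed by the weight
   [U ^ (m+1)]. *)
Lemma weighted_angle_derive (t : R) : 0 < t < delta ->
  is_derive Q t (U t ^ S m * (D t * B t)).
Proof.
  intros Ht. pose proof (HU_pos t Ht).
  replace (U t ^ S m * (D t * B t)) with
    (INR (S m) * D t * U t ^ pred (S m) * C t +
     U t ^ S m * (D t * B t - INR (S m) * C t * D t / U t))
    by (cbn [pred]; change (U t ^ S m) with (U t * U t ^ m); field; lra).
  apply (is_derive_mult (fun t => U t ^ S m) C t).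
  - apply is_derive_pow, HU_derive, Ht.
  - apply HC_derive, Ht.
  - intros; apply Rmult_comm.
Qed.

Lemma weighted_angle_increment (t tau : R) :
  0 < t < tau -> tau < delta -> running_max U tau ->
  Rabs (Q tau - Q t) <= K * U tau ^ S m * (tau - t).
Proof.
  intros Ht Htau Hmax.
  destruct (MVT_gen Q t tau (fun s => U s ^ S m * (D s * B s))) as [c [Hc Heq]].
  - intros x Hx. rewrite Rmin_left, Rmax_right in Hx by lra.
    apply weighted_angle_derive. lra.
  - intros x Hx. rewrite Rmin_left, Rmax_right in Hx by lra.
    apply continuity_pt_filterlim, (ex_derive_continuous Q).
    eexists. apply weighted_angle_derive. lra.
  - rewrite Rmin_left, Rmax_right in Hc by lra.
    assert (Hc0 : 0 < c < delta) by lra.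
    assert (HUc : 0 <= U c ^ S m <= U tau ^ S m).
    { pose proof (HU_pos c Hc0). split; [apply pow_le; lra |].
      apply pow_incr. split; [lra | apply Hmax; lra]. }
    assert (HD1 : Rabs (D c) <= 1).
    { pose proof (HCD_unit c Hc0). apply Rabs_le. split; nra. }
    pose proof (HB_bound c Hc0). pose proof (Rabs_pos (D c)). pose proof (Rabs_pos (B c)).
    rewrite Heq, !Rabs_mult, (Rabs_pos_eq (U c ^ S m)), (Rabs_pos_eq (tau - t)) by lra.
    apply Rmult_le_compat_r; [lra |].
    rewrite (Rmult_comm K). apply Rmult_le_compat; [lra | nra | lra |].
    replace K with (1 * K) by ring. apply Rmult_le_compat; lra.
Qed.

Lemma running_max_angle_le (tau : R) : 0 < tau < delta -> running_max U tau ->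
  Rabs (C tau) <= K * tau.
Proof.
  intros Htau Hmax.
  assert (HK : 0 <= K) by (pose proof (HB_bound tau Htau); pose proof (Rabs_pos (B tau)); lra).
  assert (HUtau : 0 < U tau ^ S m) by (apply pow_lt, HU_pos, Htau).
  assert (HQ : Rabs (Q tau) <= K * U tau ^ S m * tau).
  { apply Rle_plus_epsilon. intros eps Heps.
    destruct (U_small (Rmin eps 1)) as [eta [Heta Hsmall]]; [apply Rmin_pos; lra |].
    pose proof (Rmin_l eps 1). pose proof (Rmin_r eps 1).
    pose proof (Rmin_l (eta / 2) (tau / 2)). pose proof (Rmin_r (eta / 2) (tau / 2)).
    set (t := Rmin (eta / 2) (tau / 2)) in *.
    assert (Ht : 0 < t) by (apply Rmin_pos; lra).
    assert (HUt : 0 < U t < Rmin eps 1) by (split; [apply HU_pos | apply Hsmall]; lra).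
    assert (HQt : Rabs (Q t) <= eps).
    { assert (HC1 : Rabs (C t) <= 1).
      { pose proof (HCD_unit t ltac:(lra)). apply Rabs_le. split; nra. }
      assert (HUm : 0 <= U t ^ m <= 1).
      { split; [apply pow_le; lra |]. rewrite <- (pow1 m). apply pow_incr; lra. }
      unfold Q. rewrite Rabs_mult, Rabs_pos_eq by (apply pow_le; lra). simpl.
      assert (U t * U t ^ m <= U t) by nra.
      pose proof (Rabs_pos (C t)).
      assert (U t * U t ^ m * Rabs (C t) <= U t * U t ^ m * 1) by (apply Rmult_le_compat_l; nra).
      lra. }
    pose proof (weighted_angle_increment t tau ltac:(lra) ltac:(lra) Hmax).
    pose proof (Rabs_triang (Q tau - Q t) (Q t)).
    replace (Q tau - Q t + Q t) with (Q tau) in * by ring.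
    assert (K * U tau ^ S m * (tau - t) <= K * U tau ^ S m * tau).
    { apply Rmult_le_compat_l; [apply Rmult_le_pos |]; lra. }
    lra. }
  unfold Q in HQ. rewrite Rabs_mult, Rabs_pos_eq in HQ by lra.
  apply (Rmult_le_reg_l (U tau ^ S m)); [assumption |]. nra.
Qed.

Lemma running_max_speed_gt (tau : R) : 0 < tau < delta -> K * tau <= 1 / 2 ->
  running_max U tau -> 1 / 2 < D tau.
Proof.
  intros Htau HKtau Hmax.
  pose proof (running_max_angle_le tau Htau Hmax) as HC.
  pose proof (running_max_derive_nonneg U tau (D tau) ltac:(lra)
                (HU_derive tau Htau) Hmax) as HD.
  pose proof (HCD_unit tau Htau).
  assert (C tau ^ 2 <= 1 / 4).
  { assert (Rabs (C tau) <= 1 / 2) by lra.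
    replace (C tau ^ 2) with (Rabs (C tau) * Rabs (C tau))
      by (rewrite <- Rabs_mult; simpl; rewrite Rmult_1_r; apply Rabs_pos_eq, Rle_0_sqr).
    pose proof (Rabs_pos (C tau)). nra. }
  nra.
Qed.

Lemma running_max_extend (tm r : R) : 0 < tm <= r -> r < delta -> running_max U tm ->
  (forall r', tm <= r' <= r -> 1 / 2 <= D r') -> running_max U r.
Proof.
  intros Htm Hr Hmax HD.
  assert (Hmono : forall a b, tm <= a <= b -> b <= r -> U a <= U b).
  { intros a b Hab Hb. destruct (Req_dec a b) as [-> | Hne]; [lra |].
    left. apply (incr_function_le U tm r D); simpl; try lra.
    - intros x Hx1 Hx2. apply HU_derive. lra.
    - intros x Hx1 Hx2. specialize (HD x (conj Hx1 Hx2)). lra. }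
  intros t Ht. destruct (Rle_lt_dec t tm).
  - pose proof (Hmax t ltac:(lra)). pose proof (Hmono tm r ltac:(lra) ltac:(lra)). lra.
  - apply Hmono; lra.
Qed.

(* A point [tm] maximising [U] on [t0, tau], with [U < U tau] on (0, t0), is a running
   maximum; from there continuous induction on [D >= 1/2] reaches [tau]. *)
Lemma running_max_small (tau : R) : 0 < tau < delta -> K * tau <= 1 / 2 ->
  running_max U tau.
Proof.
  intros Htau HKtau.
  assert (HK : 0 <= K) by (pose proof (HB_bound tau Htau); pose proof (Rabs_pos (B tau)); lra).
  destruct (U_small (U tau) (HU_pos tau Htau)) as [eta [Heta Hsmall]].
  pose proof (Rmin_l (eta / 2) (tau / 2)). pose proof (Rmin_r (eta / 2) (tau / 2)).
  set (t0 := Rmin (eta / 2) (tau / 2)) in *.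
  assert (Ht0 : 0 < t0) by (apply Rmin_pos; lra).
  destruct (continuity_ab_maj U t0 tau) as [tm [Htm_max Htm]]; [lra | |].
  { intros c Hc. apply continuity_pt_filterlim, (ex_derive_continuous U).
    eexists. apply HU_derive. lra. }
  assert (Hmax_tm : running_max U tm).
  { intros t Ht. destruct (Rlt_le_dec t t0).
    - pose proof (Hsmall t ltac:(lra)). pose proof (Htm_max tau ltac:(lra)). lra.
    - apply Htm_max. lra. }
  assert (HKr : forall r, r <= tau -> K * r <= 1 / 2).
  { intros r Hr. apply Rle_trans with (K * tau); [apply Rmult_le_compat_l |]; lra. }
  apply (running_max_extend tm); [lra | lra | exact Hmax_tm |].
  apply continuous_induction_ge; [lra | intros r Hr; apply HD_cont; lra | | ].
  - left. apply running_max_speed_gt; [lra | apply HKr; lra | exact Hmax_tm].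
  - intros r Hr HD. apply running_max_speed_gt; [lra | apply HKr; lra |].
    apply (running_max_extend tm); [lra | lra | exact Hmax_tm | exact HD].
Qed.

Lemma angle_decay :
  filterlim C (at_right 0) (locally 0) /\ filterlim D (at_right 0) (locally 1).
Proof.
  assert (HK : 0 <= K).
  { pose proof (HB_bound (delta / 2) ltac:(lra)). pose proof (Rabs_pos (B (delta / 2))). lra. }
  set (eta := Rmin delta (/ (2 * K + 2))).
  assert (Heta : 0 < eta) by (apply Rmin_pos; [lra | apply Rinv_0_lt_compat; lra]).
  assert (Hsmall : forall t, 0 < t < eta -> t < delta /\ K * t <= 1 / 2).
  { intros t Ht. pose proof (Rmin_l delta (/ (2 * K + 2))).
    pose proof (Rmin_r delta (/ (2 * K + 2))). split; [unfold eta in *; lra |].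
    assert (K * t <= K * / (2 * K + 2)) by (apply Rmult_le_compat_l; unfold eta in *; lra).
    assert (K * / (2 * K + 2) <= 1 / 2).
    { apply (Rmult_le_reg_r (2 * K + 2)); [lra |]. rewrite Rmult_assoc, Rinv_l; lra. }
    lra. }
  split.
  - apply (filterlim_at_right_linear_bound C 0 K eta Heta).
    intros t Ht. destruct (Hsmall t Ht). rewrite Rminus_0_r.
    apply running_max_angle_le, running_max_small; lra.
  - apply (filterlim_at_right_linear_bound D 1 K eta Heta).
    intros t Ht. destruct (Hsmall t Ht).
    eapply Rle_trans; [apply unit_circle_near_one; [apply HCD_unit; lra |] |].
    + left. apply Rlt_trans with (1 / 2); [lra |].
      apply running_max_speed_gt, running_max_small; lra.
    + apply running_max_angle_le, running_max_small; lra.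
Qed.

End AngleDecay.

Lemma is_derive_comp_scal (f : R -> R) (k t df : R) :
  is_derive f (k * t) df -> is_derive (fun t => f (k * t)) t (k * df).
Proof.
  intros Hf. apply (is_derive_comp f (fun t => k * t) t df k Hf).
  auto_derive; [exact I | ring].
Qed.

Section OneSided.

Variables sigma delta : R.
Hypothesis Hsigma : sigma = 1 \/ sigma = -1.
Hypothesis Hdelta : 0 < delta.

Definition one_side (s : R) : Prop := 0 < sigma * s < delta.

Lemma sigma_sq : sigma * sigma = 1.
Proof. destruct Hsigma; subst; ring. Qed.

Lemma Rabs_sigma_mult (s : R) : Rabs (sigma * s) = Rabs s.
Proof.
  rewrite Rabs_mult. destruct Hsigma; subst.
  - rewrite Rabs_R1; ring.
  - rewrite Rabs_m1; ring.
Qed.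

Lemma sigma_mult_sigma (s : R) : sigma * (sigma * s) = s.
Proof. rewrite <- Rmult_assoc, sigma_sq; ring. Qed.

Lemma one_side_open (s : R) : one_side s -> locally s one_side.
Proof.
  intros Hs. unfold one_side in *.
  assert (Hr : 0 < Rmin (sigma * s) (delta - sigma * s)) by (apply Rmin_pos; lra).
  exists (mkposreal _ Hr). intros t Ht.
  change (Rabs (t - s) < Rmin (sigma * s) (delta - sigma * s)) in Ht.
  rewrite <- Rabs_sigma_mult, Rmult_minus_distr_l in Ht.
  pose proof (Rmin_l (sigma * s) (delta - sigma * s)).
  pose proof (Rmin_r (sigma * s) (delta - sigma * s)).
  apply Rabs_def2 in Ht. lra.
Qed.

Lemma one_side_proper : ProperFilter' (within one_side (locally 0)).
Proof.
  constructor; [|apply within_filter, locally_filter].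
  intros [eps Heps].
  pose proof (cond_pos eps).
  pose proof (Rmin_l (eps / 2) (delta / 2)). pose proof (Rmin_r (eps / 2) (delta / 2)).
  set (t := Rmin (eps / 2) (delta / 2)) in *.
  assert (0 < t) by (apply Rmin_pos; lra).
  apply (Heps (sigma * t)); unfold one_side.
  - change (Rabs (sigma * t - 0) < eps).
    rewrite Rminus_0_r, Rabs_sigma_mult, Rabs_pos_eq; lra.
  - rewrite sigma_mult_sigma. lra.
Qed.

Lemma filterlim_sigma_to_one_side :
  filterlim (fun t => sigma * t) (at_right 0) (within one_side (locally 0)).
Proof.
  intros P [eps HP].
  assert (Hr : 0 < Rmin eps delta) by (apply Rmin_pos; [apply cond_pos | lra]).
  exists (mkposreal _ Hr). intros t Ht Htpos.
  change (Rabs (t - 0) < Rmin eps delta) in Ht.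
  rewrite Rminus_0_r, Rabs_pos_eq in Ht by lra.
  pose proof (Rmin_l eps delta). pose proof (Rmin_r eps delta).
  apply HP; unfold one_side.
  - change (Rabs (sigma * t - 0) < eps).
    rewrite Rminus_0_r, Rabs_sigma_mult, Rabs_pos_eq; lra.
  - rewrite sigma_mult_sigma. lra.
Qed.

Lemma filterlim_sigma_to_at_right :
  filterlim (fun s => sigma * s) (within one_side (locally 0)) (at_right 0).
Proof.
  intros P [eps HP]. exists eps. intros s Hs Hside. apply HP.
  - change (Rabs (sigma * s - 0) < eps).
    change (Rabs (s - 0) < eps) in Hs.
    rewrite !Rminus_0_r in *. rewrite Rabs_sigma_mult. exact Hs.
  - apply Hside.
Qed.

Lemma one_side_angle_limits (u c d b : R -> R) (m : nat) (K : R) :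
  (forall s, one_side s -> is_derive u s (d s)) ->
  (forall s, one_side s -> is_derive c s (d s * b s - INR (S m) * c s * d s / u s)) ->
  (forall s, one_side s -> c s ^ 2 + d s ^ 2 = 1) ->
  (forall s, one_side s -> 0 < u s) ->
  (forall s, one_side s -> continuous d s) ->
  filterlim u (within one_side (locally 0)) (locally 0) ->
  within one_side (locally 0) (fun s => Rabs (b s) <= K) ->
  filterlim c (within one_side (locally 0)) (locally 0) /\
  filterlim d (within one_side (locally 0)) (locally sigma).
Proof.
  intros Hu Hc Hunit Hpos Hcont Hlim [eps Hb].
  pose proof (cond_pos eps).
  assert (Hdom : forall t, 0 < t < Rmin delta eps ->
            one_side (sigma * t) /\ ball 0 eps (sigma * t)).
  { intros t Ht. pose proof (Rmin_l delta eps). pose proof (Rmin_r delta eps).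
    unfold one_side. rewrite sigma_mult_sigma. split; [lra |].
    change (Rabs (sigma * t - 0) < eps). rewrite Rminus_0_r, Rabs_sigma_mult, Rabs_pos_eq; lra. }
  destruct (angle_decay (fun t => u (sigma * t)) (fun t => c (sigma * t))
              (fun t => sigma * d (sigma * t)) (fun t => b (sigma * t)) m K (Rmin delta eps))
    as [HC HD].
  - apply Rmin_pos; lra.
  - intros t Ht. apply is_derive_comp_scal, Hu, Hdom, Ht.
  - intros t Ht. destruct (Hdom t Ht) as [Hs _]. pose proof (Hpos _ Hs).
    replace (sigma * d (sigma * t) * b (sigma * t) -
             INR (S m) * c (sigma * t) * (sigma * d (sigma * t)) / u (sigma * t))
      with (sigma * (d (sigma * t) * b (sigma * t) -
             INR (S m) * c (sigma * t) * d (sigma * t) / u (sigma * t))) by (field; lra).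
    apply is_derive_comp_scal, Hc, Hs.
  - intros t Ht. rewrite <- (Hunit _ (proj1 (Hdom t Ht))).
    replace ((sigma * d (sigma * t)) ^ 2) with (sigma * sigma * d (sigma * t) ^ 2) by ring.
    rewrite sigma_sq. ring.
  - intros t Ht. apply Hpos, Hdom, Ht.
  - eapply filterlim_comp; [apply filterlim_sigma_to_one_side | exact Hlim].
  - intros t Ht. destruct (Hdom t Ht) as [Hs Hball]. apply Hb; assumption.
  - intros t Ht. apply (continuous_scal_r sigma (fun t => d (sigma * t))).
    apply (continuous_comp (fun t => sigma * t) d).
    + apply (ex_derive_continuous (fun t => sigma * t)). auto_derive. exact I.
    + apply Hcont, Hdom, Ht.
  - split.
    + apply (filterlim_ext (fun s => c (sigma * (sigma * s)))).
      { intros s. rewrite sigma_mult_sigma. reflexivity. }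
      apply (filterlim_comp _ _ _ (fun s => sigma * s) (fun t => c (sigma * t)) _ (at_right 0));
        [apply filterlim_sigma_to_at_right | exact HC].
    + apply (filterlim_ext (fun s => sigma * (sigma * d (sigma * (sigma * s))))).
      { intros s. rewrite !sigma_mult_sigma. reflexivity. }
      assert (E : scal sigma 1 = sigma) by apply Rmult_1_r. rewrite <- E at 1.
      eapply filterlim_comp; [| apply (filterlim_scal_r sigma 1)].
      apply (filterlim_comp _ _ _ (fun s => sigma * s) (fun t => sigma * d (sigma * t)) _ (at_right 0));
        [apply filterlim_sigma_to_at_right | exact HD].
Qed.

End OneSided.

Lemma Jsum_cons (j : Z) (J : list Z) (phi : Z -> R) (nj : Z -> nat) (x1 x2 v1 v2 : R) :
  Jsum (j :: J) phi nj x1 x2 v1 v2 =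
  INR (nj j) * edot (phi j) v1 v2 / eperpdot (phi j) x1 x2 + Jsum J phi nj x1 x2 v1 v2.
Proof. reflexivity. Qed.

Lemma Jsum_remove (J : list Z) (i : Z) (phi : Z -> R) (nj : Z -> nat) (x1 x2 v1 v2 : R) :
  NoDup J -> In i J ->
  Jsum J phi nj x1 x2 v1 v2 =
  INR (nj i) * edot (phi i) v1 v2 / eperpdot (phi i) x1 x2 +
  Jsum (remove Z.eq_dec i J) phi nj x1 x2 v1 v2.
Proof.
  induction J as [| j J IH]; intros Hnd Hi; [destruct Hi |].
  apply NoDup_cons_iff in Hnd as [Hj Hnd].
  simpl remove. destruct (Z.eq_dec i j) as [-> | Hne].
  - rewrite Jsum_cons, notin_remove by assumption. reflexivity.
  - destruct Hi as [-> | Hi]; [congruence |].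
    rewrite !Jsum_cons, (IH Hnd Hi). ring.
Qed.

Lemma Jsum_eventually_bounded {T : Type} {F : (T -> Prop) -> Prop} {FF : Filter F}
    (x1 x2 v1 v2 : T -> R) (x01 x02 : R) (phi : Z -> R) (nj : Z -> nat) (L : list Z) :
  filterlim x1 F (locally x01) -> filterlim x2 F (locally x02) ->
  F (fun s => v1 s ^ 2 + v2 s ^ 2 = 1) ->
  (forall j, In j L -> eperpdot (phi j) x01 x02 <> 0) ->
  exists K, F (fun s => Rabs (Jsum L phi nj (x1 s) (x2 s) (v1 s) (v2 s)) <= K).
Proof.
  intros Hx1 Hx2 Hunit. induction L as [| j L IH]; intros Hoff.
  { exists 0. apply filter_forall. intros s. simpl. rewrite Rabs_R0. lra. }
  destruct IH as [K HK]; [intros j' Hj'; apply Hoff; right; exact Hj' |].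
  set (e := eperpdot (phi j) x01 x02).
  assert (He : 0 < Rabs e / 2) by (pose proof (Rabs_pos_lt e (Hoff j (or_introl eq_refl))); lra).
  assert (Hden : F (fun s => Rabs (eperpdot (phi j) (x1 s) (x2 s) - e) < Rabs e / 2)).
  { apply (proj1 (filterlim_locally _ e)
             (filterlim_lin2 (- sin (phi j)) (cos (phi j)) x1 x2 x01 x02 Hx1 Hx2)
             (mkposreal _ He)). }
  exists (INR (nj j) / (Rabs e / 2) + K).
  apply (filter_imp (fun s => (v1 s ^ 2 + v2 s ^ 2 = 1 /\
           Rabs (eperpdot (phi j) (x1 s) (x2 s) - e) < Rabs e / 2) /\
           Rabs (Jsum L phi nj (x1 s) (x2 s) (v1 s) (v2 s)) <= K));
    [| apply filter_and; [apply filter_and |]; assumption].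
  intros s [[Hv Hd] HL]. rewrite Jsum_cons.
  eapply Rle_trans; [apply Rabs_triang | apply Rplus_le_compat; [| exact HL]].
  apply Rabs_frac_le; [apply pos_INR | apply Rabs_edot_unit, Hv | exact He |].
  pose proof (Rabs_triang_inv e (eperpdot (phi j) (x1 s) (x2 s))).
  rewrite Rabs_minus_sym in Hd. lra.
Qed.

Lemma type_data_facts (k : kind) (n : nat) (J : list Z) (phi : Z -> R) (nj : Z -> nat)
    (i : Z) :
  type_data k n J phi nj -> admissible k J i ->
  NoDup J /\ In i J /\ (1 <= nj i)%nat /\
  (forall j, In j J -> j <> i -> sin (phi j - phi i) <> 0) /\
  (forall a b, in_sector k phi i a b -> 0 < eperpdot (phi i) a b).
Proof.
  intros Htype Hadm.
  destruct k; simpl in Htype, Hadm.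
  - destruct Htype as [-> [Hphi [Hn Hn3]]]. subst i.
    split; [repeat constructor; simpl; tauto |].
    split; [simpl; auto |]. split; [lia |]. split.
    + intros j [<- | []] Hne. congruence.
    + intros a b Hs. unfold eperpdot. rewrite Hphi, sin_0, cos_0. simpl in Hs. lra.
  - destruct Htype as [-> [Hphi0 [Hphi1 [l [m [Hl [Hm [Hn0 [Hn1 _]]]]]]]]].
    destruct Hadm as [Hi _].
    split; [repeat constructor; simpl; intuition lia |].
    split; [assumption |]. split; [destruct Hi as [<- | [<- | []]]; lia |].
    split; [| intros a b [_ Hs]; exact Hs].
    intros j Hj Hne.
    destruct Hi as [<- | [<- | []]]; destruct Hj as [<- | [<- | []]]; try congruence;
      rewrite Hphi0, Hphi1.
    + replace (PI / 2 - 0) with (PI / 2) by ring. rewrite sin_PI2. lra.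
    + replace (0 - PI / 2) with (- (PI / 2)) by ring. rewrite sin_neg, sin_PI2. lra.
  - destruct Htype as [-> [Hphi [c [Hc [Hn _]]]]].
    destruct Hadm as [Hi _].
    split; [repeat constructor; simpl; intuition lia |].
    split; [assumption |]. split; [rewrite (Hn i Hi); lia |].
    split; [| intros a b [_ Hs]; exact Hs].
    intros j Hj Hne.
    replace (phi j - phi i) with (IZR (j - i) * PI / IZR 3)
      by (rewrite (Hphi j Hj), (Hphi i Hi), minus_IZR; field).
    apply sin_frac_PI_neq0; [lia |].
    destruct Hi as [<- | [<- | [<- | []]]]; destruct Hj as [<- | [<- | [<- | []]]]; lia.
  - destruct Htype as [-> [Hphi [kk [l [Hkl [Hnm1 [Hn1 [Hn0 [Hn2 _]]]]]]]]].
    destruct Hadm as [Hi _].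
    split; [repeat constructor; simpl; intuition lia |].
    split; [assumption |]. split.
    { assert (1 <= kk /\ 1 <= l)%nat.
      { destruct Hkl as [[-> ->] | [[-> ->] | [[-> ->] |
          [mm [[? [-> ->]] | [[? [-> ->]] | [? [-> ->]]]]]]]]; lia. }
      destruct Hi as [<- | [<- | [<- | [<- | []]]]]; lia. }
    split; [| intros a b [_ Hs]; exact Hs].
    intros j Hj Hne.
    replace (phi j - phi i) with (IZR (j - i) * PI / IZR 4)
      by (rewrite (Hphi j Hj), (Hphi i Hi), minus_IZR; field).
    apply sin_frac_PI_neq0; [lia |].
    destruct Hi as [<- | [<- | [<- | [<- | []]]]];
      destruct Hj as [<- | [<- | [<- | [<- | []]]]]; lia.
  - destruct Htype as [-> [Hphi [c [Hc [Hn _]]]]].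
    destruct Hadm as [Hi _].
    split; [repeat constructor; simpl; intuition lia |].
    split; [assumption |]. split; [rewrite (Hn i Hi); lia |].
    split; [| intros a b [_ Hs]; exact Hs].
    intros j Hj Hne.
    replace (phi j - phi i) with (IZR (j - i) * PI / IZR 6)
      by (rewrite (Hphi j Hj), (Hphi i Hi), minus_IZR; field).
    apply sin_frac_PI_neq0; [lia |].
    destruct Hi as [<- | [<- | [<- | [<- | [<- | [<- | []]]]]]];
      destruct Hj as [<- | [<- | [<- | [<- | [<- | [<- | []]]]]]]; lia.
Qed.

Theorem proposition3p1 (k : kind) (n : nat) (J : list Z) (phi : Z -> R)
    (nj : Z -> nat) (H : R -> R) (i : Z)
    (sigma delta : R) (x1 x2 v1 v2 a1 a2 : R -> R) (x01 x02 : R) :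
  type_data k n J phi nj ->
  (forall s, continuous H s) ->
  admissible k J i ->
  (sigma = 1 \/ sigma = -1) ->
  0 < delta ->
  (forall s, 0 < sigma * s < delta ->
     is_derive x1 s (v1 s) /\ is_derive x2 s (v2 s) /\
     is_derive v1 s (a1 s) /\ is_derive v2 s (a2 s) /\
     (- a2 s * v1 s + a1 s * v2 s)
       + Jsum J phi nj (x1 s) (x2 s) (v1 s) (v2 s)
       = (INR n - 1) * H s /\
     v1 s ^ 2 + v2 s ^ 2 = 1 /\
     in_sector k phi i (x1 s) (x2 s)) ->
  filterlim (fun s => eperpdot (phi i) (x1 s) (x2 s))
    (within (fun s => 0 < sigma * s < delta) (locally 0)) (locally 0) ->
  filterlim x1 (within (fun s => 0 < sigma * s < delta) (locally 0))
    (locally x01) ->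
  filterlim x2 (within (fun s => 0 < sigma * s < delta) (locally 0))
    (locally x02) ->
  (x01, x02) <> (0, 0) ->
  exists l1 l2 : R,
    filterlim v1 (within (fun s => 0 < sigma * s < delta) (locally 0))
      (locally l1) /\
    filterlim v2 (within (fun s => 0 < sigma * s < delta) (locally 0))
      (locally l2) /\
    filterlim (fun s => edot (phi i) (v1 s) (v2 s))
      (within (fun s => 0 < sigma * s < delta) (locally 0)) (locally 0).
Proof.
  intros Htype HHcont Hadm Hsigma Hdelta Hsol Hu Hx1 Hx2 Hx0.
  destruct (type_data_facts k n J phi nj i Htype Hadm) as [Hnd [Hi [Hni [Hsin Hsector]]]].
  destruct (nj i) as [| m] eqn:Hm; [lia |].
  change (fun s => 0 < sigma * s < delta) with (one_side sigma delta) in *.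
  set (F := within (one_side sigma delta) (locally 0)) in *.
  assert (Hline : eperpdot (phi i) x01 x02 = 0).
  { apply (filterlim_locally_unique (FF := one_side_proper sigma delta Hsigma Hdelta)
             (fun s => eperpdot (phi i) (x1 s) (x2 s))); [| exact Hu].
    apply filterlim_lin2; assumption. }
  assert (Hunit : F (fun s => v1 s ^ 2 + v2 s ^ 2 = 1)).
  { unfold F, within. apply filter_forall. intros s Hs. apply Hsol, Hs. }
  set (rest := fun s => Jsum (remove Z.eq_dec i J) phi nj (x1 s) (x2 s) (v1 s) (v2 s)).
  destruct (Jsum_eventually_bounded x1 x2 v1 v2 x01 x02 phi nj (remove Z.eq_dec i J)
              Hx1 Hx2 Hunit) as [Krest Hrest].
  { intros j Hj. apply in_remove in Hj as [Hj Hne].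
    apply (eperpdot_ne0_off_line (phi i)); auto. }
  pose proof (eventually_Rabs_le H (H 0)
                (filterlim_filter_le_1 H (filter_le_within (one_side sigma delta)) (HHcont 0)))
    as HHbound.
  pose proof (eventually_Rabs_sub_le H rest (INR n - 1) _ _ HHbound Hrest) as Hforcing.
  destruct (one_side_angle_limits sigma delta Hsigma Hdelta
              (fun s => eperpdot (phi i) (x1 s) (x2 s)) (fun s => edot (phi i) (v1 s) (v2 s))
              (fun s => eperpdot (phi i) (v1 s) (v2 s)) (fun s => (INR n - 1) * H s - rest s)
              m (Rabs (INR n - 1) * (Rabs (H 0) + 1) + Krest)) as [Hc Hd].
  - intros s Hs. apply is_derive_eperpdot; apply Hsol, Hs.
  - intros s Hs. destruct (Hsol s Hs) as [_ [_ [Hv1 [Hv2 [Hode _]]]]].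
    rewrite (Jsum_remove J i), Hm in Hode by assumption.
    apply (edot_velocity_derive _ _ _ _ _ _ _ s (a1 s) (a2 s)); try assumption.
    + apply (filter_imp (one_side sigma delta)); [| apply one_side_open; assumption].
      intros t Ht. apply Hsol, Ht.
    + apply Rgt_not_eq, Hsector, Hsol, Hs.
  - intros s Hs. rewrite edot_sqr_add_eperpdot_sqr. apply Hsol, Hs.
  - intros s Hs. apply Hsector, Hsol, Hs.
  - intros s Hs. apply (ex_derive_continuous (fun s => eperpdot (phi i) (v1 s) (v2 s))).
    eexists. apply is_derive_eperpdot; apply Hsol, Hs.
  - exact Hu.
  - exact Hforcing.
  - destruct (filterlim_frame_coords (phi i) 0 sigma v1 v2 Hc Hd) as [Hv1 Hv2].
    exists (cos (phi i) * 0 + - sin (phi i) * sigma), (sin (phi i) * 0 + cos (phi i) * sigma).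
    auto.
Qed.
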